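(* Let $a\neq 0$ be a real constant and let $M$ be the open subset $\{r>0\}$ of $\mathbb{R}^4$ with coordinates $(t,\phi,r,z)$, equipped with the Som-Raychaudhuri metric $$g=(dt+a r^{2}\,d\phi)^{2}-r^{2}\,d\phi^{2}-dr^{2}-dz^{2}.$$ Then $(M,g)$ has the following properties: (i) its Ricci tensor is cyclic parallel; (ii) it is $2$-quasi-Einstein; (iii) it is an $Ein(3)$ manifold; (iv) it is generalized quasi-Einstein both in the sense of Chaki and in the sense of De and Ghosh; (v) it is pseudo quasi-Einstein; (vi) it is special Ricci generalized pseudosymmetric, i.e. $R\cdot R=Q(S,R)$; (vii) it is a manifold of pseudosymmetric Weyl conformal curvature tensor; (viii) it is of generalized Roter type; (ix) its Ricci tensor is Riemann compatible, conformal (Weyl) compatible, concircular compatible and conharmonic compatible.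
   Context: Notation for a semi-Riemannian manifold $(M,g)$ of dimension $n$ (here $n=4$): $\nabla$ is the Levi-Civita connection, $\mathcal R(X,Y)=[\nabla_X,\nabla_Y]-\nabla_{[X,Y]}$, $R(X_1,X_2,X_3,X_4)=g(\mathcal R(X_1,X_2)X_3,X_4)$, $S$ is the Ricci tensor, $\kappa$ the scalar curvature, $\mathcal S$ the Ricci operator ($g(X,\mathcal SY)=S(X,Y)$), $S^2(X,Y)=S(X,\mathcal SY)$, $S^3(X,Y)=S(X,\mathcal S^2Y)$. For a symmetric $(0,2)$-tensor $A$, $(X\wedge_A Y)Z=A(Y,Z)X-A(X,Z)Y$. Weyl conformal operator $\mathcal C(X,Y)=\mathcal R(X,Y)-\frac{1}{n-2}\big(X\wedge_g\mathcal SY+\mathcal SX\wedge_g Y-\frac{\kappa}{n-1}X\wedge_g Y\big)$; concircular operator $\mathcal W(X,Y)=\mathcal R(X,Y)-\frac{\kappa}{n(n-1)}X\wedge_gY$; conharmonic operator $\mathcal K(X,Y)=\mathcal R(X,Y)-\frac{1}{n-2}(X\wedge_g\mathcal SY+\mathcal SX\wedge_gY)$; the $(0,4)$-tensors $C,W,K$ are obtained from these as $R$ from $\mathcal R$. For an endomorphism $\mathcal H$ and a $(0,k)$-tensor $T$, $(\mathcal H\cdot T)(X_1,\dots,X_k)=-\sum_{i}T(X_1,\dots,\mathcal HX_i,\dots,X_k)$; $(R\cdot T)(X_1,\dots,X_k,X,Y)=(\mathcal R(X,Y)\cdot T)(X_1,\dots,X_k)$, similarly $C\cdot T$ with $\mathcal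 C(X,Y)$, and $Q(A,T)(X_1,\dots,X_k,X,Y)=((X\wedge_AY)\cdot T)(X_1,\dots,X_k)$. Kulkarni–Nomizu product: $(A\wedge E)(X_1,X_2,X,Y)=A(X_1,Y)E(X_2,X)+A(X_2,X)E(X_1,Y)-A(X_1,X)E(X_2,Y)-A(X_2,Y)E(X_1,X)$. Definitions: $M$ is $k$-quasi-Einstein if $\mathrm{rank}(S-\alpha g)=k$ for some smooth function $\alpha$ (quasi-Einstein means $k=1$). $M$ is $Ein(3)$ if $S^3+a_3S^2+a_4S+a_5g=0$ for some smooth functions $a_i$. The Ricci tensor is cyclic parallel if $(\nabla_{X_1}S)(X_2,X_3)+(\nabla_{X_2}S)(X_3,X_1)+(\nabla_{X_3}S)(X_1,X_2)=0$. Let $U$ be the set of points where $S-\nu_1g-\nu_2\xi\otimes\xi\neq0$ for all scalars $\nu_1,\nu_2$ and $1$-forms $\xi$. $M$ is generalized quasi-Einstein in the sense of Chaki (resp. De and Ghosh) if on $U$, $S=\alpha g+\beta\Pi\otimes\Pi+\gamma(\Pi\otimes\Phi+\Phi\otimes\Pi)$ (resp. $S=\alpha g+\beta\Pi\otimes\Pi+\gamma\Phi\otimes\Phi$) for smooth functions $\alpha,\beta,\gamma$ and $1$-forms $\Pi,\Phi$ whose associated vector fields are mutually orthogonal. $M$ is pseudo quasi-Einstein if on $U$, $S=\alpha g+\beta\Pi\otimes\Pi+\gamma E$ for smooth functions $\alpha,\beta,\gamma$, a $1$-form $\Pi$ and a trace-free symmetric $(0,2)$-tensor $E$ with $E(X,V)=0$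 for all $X$, $V$ being the vector field associated to $\Pi$. $M$ is a manifold of pseudosymmetric Weyl conformal curvature tensor if $C\cdot C=L\,Q(g,C)$ for some smooth function $L$. $M$ is of generalized Roter type if $R=L_1g\wedge g+L_2g\wedge S+L_3S\wedge S+L_4g\wedge S^2+L_5S\wedge S^2+L_6S^2\wedge S^2$ for some smooth functions $L_j$. A symmetric $(0,2)$-tensor $E$ with endomorphism $\mathcal E$ ($g(\mathcal EX,Y)=E(X,Y)$) is Riemann compatible if $R(\mathcal EX_1,X,X_2,X_3)+R(\mathcal EX_2,X,X_3,X_1)+R(\mathcal EX_3,X,X_1,X_2)=0$ for all vector fields; conformal (Weyl), concircular and conharmonic compatibility are defined identically with $R$ replaced by $C$, $W$, $K$ respectively. *)

(* Semi-Riemannian geometry of a metric given in global coordinates on an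
   (open) subset of R^4, all tensors written in the coordinate frame
   d/dx_0, ..., d/dx_3. *)
From HB Require Import structures.
From mathcomp Require Import all_boot all_order all_algebra.
From mathcomp Require Import all_classical all_reals all_analysis.
Set Implicit Arguments. Unset Strict Implicit. Unset Printing Implicit Defensive.
Import Order.TTheory GRing.Theory Num.Theory.
Import numFieldNormedType.Exports.
Local Open Scope ring_scope.

Section Geometry.
Variable R : realType.

Definition pt := 'rV[R]_4.
Definition T4 := 'I_4 -> 'I_4 -> 'I_4 -> 'I_4 -> R.

(* the coordinate vector field d/dx_i (also the i-th standard (co)vector) *)
Definition ecoord (i : 'I_4) : 'rV[R]_4 := delta_mx 0 i.

Definition partial (i : 'I_4) (f : pt -> R) : pt -> R :=
  fun x => 'D_(ecoord i) f x.

Fixpoint ipartial (ds : seq 'I_4) (f : pt -> R) : pt -> R :=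
  match ds with
  | [::] => f
  | i :: ds' => partial i (ipartial ds' f)
  end.

Definition smooth_on (U : set pt) (f : pt -> R) : Prop :=
  forall (ds : seq 'I_4) (x : pt), U x ->
    {for x, continuous (ipartial ds f)} /\
    (forall i, derivable (ipartial ds f) x (ecoord i)).

Definition smooth_vec_on (U : set pt) (P : pt -> 'rV[R]_4) : Prop :=
  forall i, smooth_on U (fun x => P x 0 i).

Definition smooth_mx_on (U : set pt) (E : pt -> 'M[R]_4) : Prop :=
  forall i j, smooth_on U (fun x => E x i j).

(* Pointwise tensor algebra.  Convention for endomorphisms H of the     *)
(* tangent space: H c m is the m-th component of H(d/dx_c), so that     *)
(* H(u) = u *m H for a row vector u of components.                      *)

(* (X /\_A Y) Z = A(Y,Z) X - A(X,Z) Y  as an endomorphism matrix *)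
Definition wedgeE (A : 'M[R]_4) (u v : 'rV[R]_4) : 'M[R]_4 :=
  \matrix_(c, m) ((v *m A) 0 c * u 0 m - (u *m A) 0 c * v 0 m).

Definition dotT (H : 'M[R]_4) (T : T4) : T4 :=
  fun i j k l => - \sum_(m < 4)
    (H i m * T m j k l + H j m * T i m k l + H k m * T i j m l + H l m * T i j k m).

Definition KN (A E : 'M[R]_4) : T4 :=
  fun i j a b => A i b * E j a + A j a * E i b - A i a * E j b - A j b * E i a.

Definition compatible (T : T4) (Emx : 'M[R]_4) : Prop :=
  forall i a j k : 'I_4,
    \sum_(p < 4) (Emx i p * T p a j k + Emx j p * T p a k i + Emx k p * T p a i j) = 0.

Variable G : pt -> 'M[R]_4.

Definition ginv (x : pt) : 'M[R]_4 := invmx (G x).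

Definition dg (k i j : 'I_4) (x : pt) : R := partial k (fun y => G y i j) x.

(* Christoffel symbols Gamma^k_ij : nabla_{d_i} d_j = sum_k Gamma^k_ij d_k *)
Definition Gam (x : pt) (k i j : 'I_4) : R :=
  2^-1 * \sum_(l < 4) ginv x k l * (dg i j l x + dg j i l x - dg l i j x).

(* curvature operator  R(d_a, d_b) = [nabla_a, nabla_b] (coordinate fields
   commute), as an endomorphism matrix *)
Definition Rop (x : pt) (a b : 'I_4) : 'M[R]_4 :=
  \matrix_(c, p)
    (partial a (fun y => Gam y p b c) x - partial b (fun y => Gam y p a c) x
     + \sum_(m < 4) (Gam x m b c * Gam x p a m - Gam x m a c * Gam x p b m)).

(* lowering the last index: T(X1,X2,X3,X4) = g(H(X1,X2)X3, X4) *)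
Definition lower (x : pt) (H : 'I_4 -> 'I_4 -> 'M[R]_4) : T4 :=
  fun i j k l => \sum_(m < 4) H i j k m * G x m l.

Definition Rt (x : pt) : T4 := lower x (Rop x).

(* Ricci tensor S(X,Y) = tr (Z |-> R(Z,X)Y) *)
Definition Ric (x : pt) : 'M[R]_4 := \matrix_(b, c) \sum_(a < 4) Rop x a b c a.

(* Ricci operator: g(X, S Y) = S(X,Y) *)
Definition Sop (x : pt) : 'M[R]_4 := (ginv x *m Ric x)^T.

Definition kappa (x : pt) : R := \tr (ginv x *m Ric x).

Definition Ric2 (x : pt) : 'M[R]_4 := Ric x *m ginv x *m Ric x.
Definition Ric3 (x : pt) : 'M[R]_4 := Ric x *m ginv x *m Ric x *m ginv x *m Ric x.

Definition nablaS (x : pt) (i j k : 'I_4) : R :=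
  partial i (fun y => Ric y j k) x
  - \sum_(m < 4) (Gam x m i j * Ric x m k + Gam x m i k * Ric x j m).

(* 1-forms / vectors as row vectors of components *)
Definition sharp (x : pt) (u : 'rV[R]_4) : 'rV[R]_4 := u *m (ginv x)^T.
Definition gprod (x : pt) (u v : 'rV[R]_4) : R := (u *m G x *m v^T) 0 0.

Definition nR : R := 4%:R.

Definition Cop (x : pt) (a b : 'I_4) : 'M[R]_4 :=
  Rop x a b - (nR - 2)^-1 *:
    (wedgeE (G x) (ecoord a) (ecoord b *m Sop x)
     + wedgeE (G x) (ecoord a *m Sop x) (ecoord b)
     - (kappa x / (nR - 1)) *: wedgeE (G x) (ecoord a) (ecoord b)).

Definition Wop (x : pt) (a b : 'I_4) : 'M[R]_4 :=
  Rop x a b - (kappa x / (nR * (nR - 1))) *: wedgeE (G x) (ecoord a) (ecoord b).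

Definition Kop (x : pt) (a b : 'I_4) : 'M[R]_4 :=
  Rop x a b - (nR - 2)^-1 *:
    (wedgeE (G x) (ecoord a) (ecoord b *m Sop x)
     + wedgeE (G x) (ecoord a *m Sop x) (ecoord b)).

Definition Ct (x : pt) : T4 := lower x (Cop x).
Definition Wt (x : pt) : T4 := lower x (Wop x).
Definition Kt (x : pt) : T4 := lower x (Kop x).

Variable M : set pt.

Definition Ricci_cyclic_parallel : Prop :=
  forall x, M x -> forall i j k,
    nablaS x i j k + nablaS x j k i + nablaS x k i j = 0.

Definition k_quasi_Einstein (k : nat) : Prop :=
  exists alpha : pt -> R,
    smooth_on M alpha /\ (forall x, M x -> \rank (Ric x - alpha x *: G x)%R = k).

Definition Ein3 : Prop :=
  exists a3 a4 a5 : pt -> R,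
    [/\ smooth_on M a3, smooth_on M a4, smooth_on M a5 &
      forall x, M x ->
        Ric3 x + a3 x *: Ric2 x + a4 x *: Ric x + a5 x *: G x = 0].

Definition Uset : set pt :=
  [set x | M x /\ forall (nu1 nu2 : R) (xi : 'rV[R]_4),
             Ric x != nu1 *: G x + nu2 *: (xi^T *m xi)].

Definition tens (P Q : 'rV[R]_4) : 'M[R]_4 := P^T *m Q.

Definition gen_quasi_Einstein_Chaki : Prop :=
  exists (alpha beta gamma : pt -> R) (Pi Phi : pt -> 'rV[R]_4),
    [/\ smooth_on Uset alpha, smooth_on Uset beta, smooth_on Uset gamma,
        smooth_vec_on Uset Pi /\ smooth_vec_on Uset Phi &
      forall x, Uset x ->
        (gprod x (sharp x (Pi x)) (sharp x (Phi x)) = 0) /\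
        (Ric x = alpha x *: G x + beta x *: tens (Pi x) (Pi x)
                 + gamma x *: (tens (Pi x) (Phi x) + tens (Phi x) (Pi x)))].

Definition gen_quasi_Einstein_DeGhosh : Prop :=
  exists (alpha beta gamma : pt -> R) (Pi Phi : pt -> 'rV[R]_4),
    [/\ smooth_on Uset alpha, smooth_on Uset beta, smooth_on Uset gamma,
        smooth_vec_on Uset Pi /\ smooth_vec_on Uset Phi &
      forall x, Uset x ->
        (gprod x (sharp x (Pi x)) (sharp x (Phi x)) = 0) /\
        (Ric x = alpha x *: G x + beta x *: tens (Pi x) (Pi x)
                 + gamma x *: tens (Phi x) (Phi x))].

Definition pseudo_quasi_Einstein : Prop :=
  exists (alpha beta gamma : pt -> R) (Pi : pt -> 'rV[R]_4) (E : pt -> 'M[R]_4),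
    [/\ smooth_on Uset alpha, smooth_on Uset beta, smooth_on Uset gamma,
        smooth_vec_on Uset Pi /\ smooth_mx_on Uset E &
      forall x, Uset x ->
        [/\ (E x)^T = E x, \tr (ginv x *m E x) = 0,
            E x *m (sharp x (Pi x))^T = 0 &
            Ric x = alpha x *: G x + beta x *: tens (Pi x) (Pi x)
                    + gamma x *: E x]].

Definition special_Ricci_gen_pseudosymmetric : Prop :=
  forall x, M x -> forall i j k l a b : 'I_4,
    dotT (Rop x a b) (Rt x) i j k l
    = dotT (wedgeE (Ric x) (ecoord a) (ecoord b)) (Rt x) i j k l.

Definition Weyl_pseudosymmetric : Prop :=
  exists L : pt -> R, smooth_on M L /\
    forall x, M x -> forall i j k l a b : 'I_4,
      dotT (Cop x a b) (Ct x) i j k l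
      = L x * dotT (wedgeE (G x) (ecoord a) (ecoord b)) (Ct x) i j k l.

Definition gen_Roter_type : Prop :=
  exists L1 L2 L3 L4 L5 L6 : pt -> R,
    [/\ [/\ smooth_on M L1, smooth_on M L2 & smooth_on M L3],
        [/\ smooth_on M L4, smooth_on M L5 & smooth_on M L6] &
      forall x, M x -> forall i j k l : 'I_4,
        Rt x i j k l =
          L1 x * KN (G x) (G x) i j k l + L2 x * KN (G x) (Ric x) i j k l
          + L3 x * KN (Ric x) (Ric x) i j k l + L4 x * KN (G x) (Ric2 x) i j k l
          + L5 x * KN (Ric x) (Ric2 x) i j k l + L6 x * KN (Ric2 x) (Ric2 x) i j k l].

Definition Ricci_Riemann_compatible : Prop :=
  forall x, M x -> compatible (Rt x) (Sop x).
Definition Ricci_Weyl_compatible : Prop :=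
  forall x, M x -> compatible (Ct x) (Sop x).
Definition Ricci_concircular_compatible : Prop :=
  forall x, M x -> compatible (Wt x) (Sop x).
Definition Ricci_conharmonic_compatible : Prop :=
  forall x, M x -> compatible (Kt x) (Sop x).

End Geometry.

Definition i_t : 'I_4 := @Ordinal 4 0 isT.
Definition i_phi : 'I_4 := @Ordinal 4 1 isT.
Definition i_r : 'I_4 := @Ordinal 4 2 isT.
Definition i_z : 'I_4 := @Ordinal 4 3 isT.

Definition SR_M (R : realType) : set (pt R) := [set x | 0 < x 0 i_r].

Definition SR_metric (R : realType) (a : R) (x : pt R) : 'M[R]_4 :=
  let r := x 0 i_r in
  let theta := ecoord R i_t + (a * r ^+ 2) *: ecoord R i_phi in
  tens theta theta - r ^+ 2 *: tens (ecoord R i_phi) (ecoord R i_phi)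
  - tens (ecoord R i_r) (ecoord R i_r) - tens (ecoord R i_z) (ecoord R i_z).

(* In the coordinates (t, phi, r, z) the components of g and of its inverse
   are Laurent polynomials in a and r, and partial derivatives act only in the
   r-direction; hence the Christoffel symbols and every tensor built from the
   curvature have Laurent-polynomial components too.  We represent such
   functions symbolically (rational coefficients, plus a formal sqrt 2 needed
   for Chaki's decomposition), show that evaluation commutes with the ring
   operations and with d/dr, and compute all tensors of the theorem by
   evaluation in the kernel; each claimed identity then reduces to a symbolic
   difference being zero.  The witnesses come from the shape of the Ricci
   tensor, S = -2a^2 (g - 2 theta (x) theta + dz (x) dz) with
   theta = dt + a r^2 dphi: S + 2a^2 g has rank 2, S^3 = 4a^4 S,
   C.C = (2a^2/3) Q(g, C), and R = (a^2/2) g/\g - (S/\S + g/\S^2) / (4a^2)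
   for the Kulkarni-Nomizu product /\. *)

From mathcomp Require Import all_boot all_order all_algebra.
From mathcomp Require Import all_classical all_reals all_analysis.
From mathcomp Require Import ssrZ ring lra zify.
From Stdlib Require Import BinInt Pnat.
From Stdlib Require QArith_base Qreduction.
Import QArith_base(Q, Qmake, Qnum, Qden, Qplus, Qmult, Qopp, Qeq, Qeq_bool,
  Qeq_bool_iff, inject_Z) Qreduction(Qred, Qred_correct).
Set Implicit Arguments. Unset Strict Implicit. Unset Printing Implicit Defensive.
Import Order.TTheory GRing.Theory Num.Theory.
Import numFieldNormedType.Exports.
Local Open Scope ring_scope.

(** * Laurent polynomials in a and r *)

(* [Monom ea er s c] stands for c * a ^ ea * r ^ er * (sqrt 2) ^ s. *)
Inductive monom := Monom (ea er : Z) (s : bool) (c : Q).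
Definition lpoly := seq monom.

Definition qadd (x y : Q) : Q := Qred (Qplus x y).
Definition qmul (x y : Q) : Q := Qred (Qmult x y).

Definition monom_coef (m : monom) : Q := let: Monom _ _ _ c := m in c.

Definition same_power (m1 m2 : monom) : bool :=
  let: Monom a1 r1 s1 _ := m1 in let: Monom a2 r2 s2 _ := m2 in
  Z.eqb a1 a2 && Z.eqb r1 r2 && Bool.eqb s1 s2.

Fixpoint lpadd_monom (m : monom) (p : lpoly) : lpoly :=
  match p with
  | [::] => [:: m]
  | m' :: p' =>
    if same_power m m' then
      let: Monom a1 r1 s1 c1 := m' in Monom a1 r1 s1 (qadd (monom_coef m) c1) :: p'
    else m' :: lpadd_monom m p'
  end.

Definition lpadd (p q : lpoly) : lpoly := foldr lpadd_monom q p.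

Definition monom_mul (m1 m2 : monom) : monom :=
  let: Monom a1 r1 s1 c1 := m1 in let: Monom a2 r2 s2 c2 := m2 in
  Monom (a1 + a2) (r1 + r2) (xorb s1 s2)
        (qmul (Qmult c1 c2) (if s1 && s2 then Qmake 2 1 else Qmake 1 1)).

Definition lpmul (p q : lpoly) : lpoly :=
  foldr (fun m acc => lpadd (map (monom_mul m) q) acc) [::] p.

Definition monom_opp (m : monom) : monom :=
  let: Monom a1 r1 s1 c1 := m in Monom a1 r1 s1 (Qopp c1).
Definition lpopp (p : lpoly) : lpoly := map monom_opp p.
Definition lpsub (p q : lpoly) : lpoly := lpadd p (lpopp q).

Definition lpmonom (ea er : Z) (c : Q) : lpoly := [:: Monom ea er false c].
Definition lpC (c : Q) : lpoly := lpmonom 0 0 c.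
Definition lp0 : lpoly := [::].
Definition lp1 : lpoly := lpC (Qmake 1 1).
Definition lpsqrt2 : lpoly := [:: Monom 0 0 true (Qmake 1 1)].

Definition monom_deriv (m : monom) : monom :=
  let: Monom a1 r1 s1 c1 := m in Monom a1 (r1 - 1) s1 (qmul c1 (inject_Z r1)).
Definition lpderiv (p : lpoly) : lpoly := map monom_deriv p.
Definition lppartial (i : 'I_4) (p : lpoly) : lpoly := if i == i_r then lpderiv p else lp0.

(* [lpadd p [::]] merges the monomials of [p] with equal powers. *)
Definition coef_neq0 (m : monom) : bool := ~~ Qeq_bool (monom_coef m) (Qmake 0 1).
Definition lpnorm (p : lpoly) : lpoly := seq.filter coef_neq0 (lpadd p [::]).
Definition lp_eq0 (p : lpoly) : bool := ~~ has coef_neq0 (lpadd p [::]).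

Section Evaluation.
Variable R : realType.

Definition zeval (z : Z) : R := (int_of_Z z)%:~R.
Definition qeval (q : Q) : R := zeval (Qnum q) / zeval (Zpos (Qden q)).
Definition monom_eval (a r : R) (m : monom) : R :=
  let: Monom ea er s c := m in
  qeval c * (a ^ int_of_Z ea * r ^ int_of_Z er) * (if s then Num.sqrt 2 else 1).
Definition lpeval (a r : R) (p : lpoly) : R := \sum_(m <- p) monom_eval a r m.

Lemma zevalD x y : zeval (x + y) = zeval x + zeval y.
Proof. by rewrite /zeval -intrD -raddfD. Qed.

Lemma zevalM x y : zeval (x * y) = zeval x * zeval y.
Proof. by rewrite /zeval -intrM -rmorphM. Qed.

Lemma zevalN x : zeval (- x) = - zeval x.
Proof. by rewrite /zeval -intrN -raddfN. Qed.

Lemma zeval_pos_neq0 p : zeval (Zpos p) != 0.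
Proof.
rewrite /zeval /= intr_eq0 /=; apply/negP => /eqP [].
by have := Pos2Nat.is_pos p => /ssrnat.ltP; case: (Pos.to_nat p).
Qed.

Lemma qevalD x y : qeval (Qplus x y) = qeval x + qeval y.
Proof.
case: x y => [xn xd] [yn yd]; rewrite /qeval /Qplus /=.
have hx := zeval_pos_neq0 xd; have hy := zeval_pos_neq0 yd.
rewrite -[Z.pos (xd * yd)]/(Z.pos xd * Z.pos yd)%Z zevalD !zevalM.
by field; rewrite hx hy.
Qed.

Lemma qevalM x y : qeval (Qmult x y) = qeval x * qeval y.
Proof.
case: x y => [xn xd] [yn yd]; rewrite /qeval /Qmult /=.
have hx := zeval_pos_neq0 xd; have hy := zeval_pos_neq0 yd.
rewrite -[Z.pos (xd * yd)]/(Z.pos xd * Z.pos yd)%Z !zevalM.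
by field; rewrite hx hy.
Qed.

Lemma qevalN x : qeval (Qopp x) = - qeval x.
Proof. by case: x => [xn xd]; rewrite /qeval /= zevalN mulNr. Qed.

Lemma qeval_eq x y : Qeq x y -> qeval x = qeval y.
Proof.
case: x y => [xn xd] [yn yd]; rewrite /Qeq /qeval /= => h.
have hx := zeval_pos_neq0 xd; have hy := zeval_pos_neq0 yd.
by apply/eqP; rewrite eqr_div // -!zevalM h.
Qed.

Lemma qeval_add x y : qeval (qadd x y) = qeval x + qeval y.
Proof. by rewrite /qadd (qeval_eq (Qred_correct _)) qevalD. Qed.

Lemma qeval_mul x y : qeval (qmul x y) = qeval x * qeval y.
Proof. by rewrite /qmul (qeval_eq (Qred_correct _)) qevalM. Qed.

Lemma qeval_int (z : Z) : qeval (inject_Z z) = zeval z.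
Proof. by rewrite /qeval /= /zeval /= divr1. Qed.

Lemma qeval_eq0 x : Qeq_bool x (Qmake 0 1) -> qeval x = 0.
Proof. by move/Qeq_bool_iff/qeval_eq ->; rewrite /qeval /= /zeval mul0r. Qed.

Variables a r : R.
Hypotheses (a_neq0 : a != 0) (r_neq0 : r != 0).

Lemma lpeval_cons m p : lpeval a r (m :: p) = monom_eval a r m + lpeval a r p.
Proof. exact: big_cons. Qed.

Lemma lpeval_add_monom m p : lpeval a r (lpadd_monom m p) = monom_eval a r m + lpeval a r p.
Proof.
case: m => a1 r1 s1 c1; elim: p => [|[a2 r2 s2 c2] p IH] /=.
  by rewrite /lpeval big_cons big_nil.
rewrite !lpeval_cons; case: ifP => [/andP[/andP[/Z.eqb_spec <- /Z.eqb_spec <-]] /Bool.eqb_prop <-|_].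
  by rewrite lpeval_cons /= qeval_add !mulrDl addrA.
by rewrite lpeval_cons IH addrCA.
Qed.

Lemma lpevalD p q : lpeval a r (lpadd p q) = lpeval a r p + lpeval a r q.
Proof.
elim: p => [|m p IH] /=; first by rewrite /lpeval big_nil add0r.
by rewrite lpeval_add_monom IH lpeval_cons addrA.
Qed.

Lemma sqrt2_mul : Num.sqrt 2 * Num.sqrt 2 = 2 :> R.
Proof. by rewrite -expr2 sqr_sqrtr // ler0n. Qed.

Lemma monom_evalM m1 m2 : monom_eval a r (monom_mul m1 m2) = monom_eval a r m1 * monom_eval a r m2.
Proof.
case: m1 m2 => [a1 r1 s1 c1] [a2 r2 s2 c2] /=.
rewrite qeval_mul qevalM !raddfD /= !expfzDr //.
have q1 : qeval (Qmake 1 1) = 1 by rewrite /qeval /zeval /= divr1.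
have q2 : qeval (Qmake 2 1) = Num.sqrt 2 * Num.sqrt 2.
  by rewrite sqrt2_mul /qeval /zeval /= divr1.
by case: s1; case: s2; rewrite /= ?q1 ?q2; ring.
Qed.

Lemma lpevalM p q : lpeval a r (lpmul p q) = lpeval a r p * lpeval a r q.
Proof.
elim: p => [|m p IH] /=; first by rewrite /lpeval !big_nil mul0r.
rewrite lpevalD IH lpeval_cons mulrDl; congr (_ + _).
by rewrite /lpeval big_map mulr_sumr; apply: eq_bigr => m' _; rewrite monom_evalM.
Qed.

Lemma lpevalN p : lpeval a r (lpopp p) = - lpeval a r p.
Proof.
rewrite /lpeval big_map -sumrN; apply: eq_bigr => -[a1 r1 s1 c1] _ /=.
by rewrite qevalN !mulNr.
Qed.

Lemma lpevalB p q : lpeval a r (lpsub p q) = lpeval a r p - lpeval a r q.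
Proof. by rewrite lpevalD lpevalN. Qed.

Lemma lpevalC c : lpeval a r (lpC c) = qeval c.
Proof. by rewrite /lpeval big_seq1 /= !expr0z !mulr1. Qed.

Lemma lpeval_monom ea er c :
  lpeval a r (lpmonom ea er c) = qeval c * (a ^ int_of_Z ea * r ^ int_of_Z er).
Proof. by rewrite /lpeval big_seq1 /= mulr1. Qed.

Lemma lpeval0 : lpeval a r lp0 = 0.
Proof. exact: big_nil. Qed.

Lemma lpeval1 : lpeval a r lp1 = 1.
Proof. by rewrite lpevalC /qeval /= /zeval /= divr1. Qed.

Lemma lpeval_filter_coef p : lpeval a r (seq.filter coef_neq0 p) = lpeval a r p.
Proof.
rewrite /lpeval big_filter [RHS](bigID coef_neq0) /= [X in _ + X]big1 ?addr0 //.
by case=> a1 r1 s1 c1 /= /negbNE/qeval_eq0 ->; rewrite !mul0r.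
Qed.

Lemma lpeval_norm p : lpeval a r (lpnorm p) = lpeval a r p.
Proof. by rewrite lpeval_filter_coef lpevalD lpeval0 addr0. Qed.

Lemma lp_eq0P p : lp_eq0 p -> lpeval a r p = 0.
Proof.
rewrite /lp_eq0 -[lpeval a r p]addr0 -lpeval0 -lpevalD.
elim: (lpadd p [::]) => [|[a1 r1 s1 c1] s IH] /=; first by rewrite /lpeval big_nil.
rewrite negb_or lpeval_cons => /andP[/negbNE/qeval_eq0 /= -> /IH ->].
by rewrite !mul0r add0r.
Qed.

Lemma lp_eq0_eval p q : lp_eq0 (lpsub p q) -> lpeval a r p = lpeval a r q.
Proof. by move/lp_eq0P/eqP; rewrite lpevalB subr_eq0 => /eqP. Qed.

Lemma lpeval_neq0 p q : lp_eq0 (lpsub (lpmul p q) lp1) -> lpeval a r p != 0.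
Proof.
move/lp_eq0_eval; rewrite lpevalM lpeval1 => pq1.
by apply/negP => /eqP p0; move: pq1; rewrite p0 mul0r => /eqP; rewrite eq_sym oner_eq0.
Qed.

End Evaluation.

(** * Derivatives in the r-direction *)

Section Derivatives.
Variable R : realType.

Lemma is_derive_exprz (n : int) (x : R) : x != 0 ->
  is_derive x 1 (fun r : R => r ^ n) (n%:~R * x ^ (n - 1)).
Proof.
move=> hx; case: n => k.
- rewrite -[fun r : R => r ^ Posz k]/(@GRing.exp R ^~ k).
  apply: DeriveDef; first exact: exprn_derivable.
  rewrite exp_derive [_%:A]mulr1; case: k => [|k]; first by rewrite scale0r mul0r.
  by have -> : (Posz k.+1 - 1 = Posz k)%R by rewrite -addn1 PoszD addrK.
- rewrite -[fun r : R => r ^ Negz k]/(fun r => (@GRing.exp R ^~ k.+1 r)^-1).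
  apply: DeriveDef; first by apply: derivableV; [rewrite expf_neq0|exact: exprn_derivable].
  rewrite deriveV ?expf_neq0 //; last exact: exprn_derivable.
  rewrite -derive1E exp_derive1 [_ *: _]/(_ * _).
  have -> : (Negz k - 1 = Negz k.+1)%R by rewrite !NegzE; lia.
  have hk : x ^+ k != 0 by rewrite expf_neq0.
  change (- ((x ^+ k.+1) ^+ 2)^-1 * ((k.+1)%:R * x ^+ k) = - ((k.+1)%:R) * (x ^+ k.+2)^-1).
  by rewrite !exprS; field; rewrite hx hk.
Qed.

Lemma diffquot_coord (F : R -> R) (x v : pt R) (j : 'I_4) :
  (fun h : R => h^-1 *: (((fun y : pt R => F (y 0 j)) \o shift x) (h *: v) - F (x 0 j)))
  = (fun h : R => h^-1 *: ((F \o shift (x 0 j)) (h *: v 0 j) - F (x 0 j))).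
Proof. by apply/funext => h /=; rewrite !mxE. Qed.

Lemma derive_coord (F : R -> R) (x v : pt R) (j : 'I_4) :
  'D_v (fun y : pt R => F (y 0 j)) x = 'D_(v 0 j) F (x 0 j).
Proof. by rewrite /derive diffquot_coord. Qed.

Lemma derivable_coord (F : R -> R) (x v : pt R) (j : 'I_4) :
  derivable (fun y : pt R => F (y 0 j)) x v <-> derivable F (x 0 j) (v 0 j).
Proof. by rewrite /derivable diffquot_coord. Qed.

Lemma is_derive_lpeval (a : R) p (x : R) : x != 0 ->
  is_derive x 1 (fun r => lpeval a r p) (lpeval a x (lpderiv p)).
Proof.
move=> hx; elim: p => [|m p IH].
  have -> : (fun r => lpeval a r [::]) = cst 0 by apply/funext => r; exact: big_nil.
  by rewrite /lpeval big_nil; exact: is_derive_cst.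
have -> : (fun r => lpeval a r (m :: p)) = (fun r => monom_eval a r m) + (fun r => lpeval a r p).
  by apply/funext => r; exact: big_cons.
rewrite [lpeval _ _ _]big_cons; apply: is_deriveD => //.
case: m => ea er s c.
set K := qeval R c * a ^ int_of_Z ea * (if s then Num.sqrt 2 else 1).
have -> : (fun r => monom_eval a r (Monom ea er s c)) = K *: (fun r : R => r ^ int_of_Z er).
  apply/funext => r; transitivity (K * r ^ int_of_Z er); last by [].
  by rewrite /K /=; ring.
apply: (is_derive_eq (is_deriveZ K (is_derive_exprz (int_of_Z er) hx))).
rewrite /= qeval_mul qeval_int /zeval.
have -> : int_of_Z (er - 1)%Z = int_of_Z er - 1 by rewrite -[(er - 1)%Z]/(er - 1)%R raddfB.
transitivity (K * ((int_of_Z er)%:~R * x ^ (int_of_Z er - 1))); first by [].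
by rewrite /K; clear K; case: s; ring.
Qed.

Lemma near_coord_neq0 (x : pt R) (j : 'I_4) :
  x 0 j != 0 -> \forall y \near x, (y : pt R) 0 j != 0.
Proof.
move=> hx.
have hn : nbhs (x 0 j) [set c : R | c != 0]%classic.
  by apply: open_nbhs_nbhs; split => //; exact: open_neq.
exact: (@coord_continuous R 1 4 0 j x) _ hn.
Qed.

Lemma partial_lpeval (a : R) (f : pt R -> R) p (y : pt R) : y 0 i_r != 0 ->
  (forall z : pt R, z 0 i_r != 0 -> f z = lpeval a (z 0 i_r) p) ->
  forall i, partial i f y = lpeval a (y 0 i_r) (lppartial i p) /\ derivable f y (ecoord R i).
Proof.
move=> hy hf i.
have hn : \forall z \near y, (fun z : pt R => lpeval a (z 0 i_r) p) z = f z.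
  by apply: filterS (near_coord_neq0 hy) => z hz; rewrite hf.
have hd := is_derive_lpeval a p hy.
have ecoord_r : ecoord R i 0 i_r = (i_r == i)%:R by rewrite /ecoord mxE eqxx.
split.
  rewrite /partial -(near_eq_derive _ hn) (derive_coord (fun r => lpeval a r p)) ecoord_r.
  by rewrite /lppartial eq_sym; case: ifP => _ /=; [rewrite derive_val | rewrite derive0 lpeval0].
apply: (near_eq_derivable hn); apply/(derivable_coord (fun r => lpeval a r p)).
rewrite ecoord_r; case: (i_r == i) => /=; last exact: derivable0.
exact: ex_derive.
Qed.

Lemma ipartial_lpeval (a : R) (f : pt R -> R) p :
  (forall z : pt R, z 0 i_r != 0 -> f z = lpeval a (z 0 i_r) p) ->
  forall ds, exists q, forall z : pt R, z 0 i_r != 0 -> ipartial ds f z = lpeval a (z 0 i_r) q.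
Proof.
move=> hf; elim => [|i ds [q IH]]; first by exists p.
exists (lppartial i q) => z hz /=.
by case: (partial_lpeval hz IH i).
Qed.

Lemma continuous_lpeval (a : R) (q : lpoly) (x : pt R) : x 0 i_r != 0 ->
  {for x, continuous (fun z : pt R => lpeval a (z 0 i_r) q)}.
Proof.
move=> hx; have hd := is_derive_lpeval a q hx.
have hF : {for x 0 i_r, continuous (fun r => lpeval a r q)}.
  by apply: differentiable_continuous; apply/derivable1_diffP; exact: ex_derive.
exact: continuous_comp (@coord_continuous R 1 4 0 i_r x) hF.
Qed.

Lemma smooth_lpeval (a : R) (f : pt R -> R) p :
  (forall z : pt R, z 0 i_r != 0 -> f z = lpeval a (z 0 i_r) p) -> smooth_on (@SR_M R) f.
Proof.
move=> hf ds x hx.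
have hx0 : x 0 i_r != 0 by rewrite gt_eqF.
have [q hq] := ipartial_lpeval hf ds.
split; last by move=> i; case: (partial_lpeval hx0 hq i).
have hn : \forall z \near x, (fun z : pt R => lpeval a (z 0 i_r) q) z = ipartial ds f z.
  by apply: filterS (near_coord_neq0 hx0) => z hz; rewrite hq.
rewrite /prop_for /continuous_at (hq _ hx0).
have hc := @continuous_lpeval a q x hx0.
exact: cvg_trans (near_eq_cvg hn) hc.
Qed.

End Derivatives.

(** * Symbolic tensors *)

Definition smx := 'I_4 -> 'I_4 -> lpoly.
Definition svec := 'I_4 -> lpoly.
Definition stensor := 'I_4 -> 'I_4 -> 'I_4 -> 'I_4 -> lpoly.

Definition ssum4 (F : 'I_4 -> lpoly) : lpoly :=
  lpadd (F i_t) (lpadd (F i_phi) (lpadd (F i_r) (F i_z))).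
Definition all_ord4 (f : 'I_4 -> bool) : bool := [&& f i_t, f i_phi, f i_r & f i_z].

Definition smxmul (A B : smx) : smx := fun i j => ssum4 (fun k => lpmul (A i k) (B k j)).
Definition svmul (u : svec) (A : smx) : svec := fun j => ssum4 (fun k => lpmul (u k) (A k j)).
Definition smxtr (A : smx) : smx := fun i j => A j i.
Definition smxadd (A B : smx) : smx := fun i j => lpadd (A i j) (B i j).
Definition smxsub (A B : smx) : smx := fun i j => lpsub (A i j) (B i j).
Definition smxscale (c : lpoly) (A : smx) : smx := fun i j => lpmul c (A i j).
Definition svadd (u v : svec) : svec := fun i => lpadd (u i) (v i).
Definition svscale (c : lpoly) (u : svec) : svec := fun i => lpmul c (u i).
Definition sdelta (i : 'I_4) : svec := fun j => if j == i then lp1 else lp0.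
Definition stens (P Q : svec) : smx := fun i j => lpmul (P i) (Q j).
Definition smxtrace (A : smx) : lpoly := ssum4 (fun i => A i i).

Definition swedge (A : smx) (u v : svec) : smx :=
  fun c m => lpsub (lpmul (svmul v A c) (u m)) (lpmul (svmul u A c) (v m)).
Definition sdot (H : smx) (T : stensor) : stensor := fun i j k l =>
  lpopp (ssum4 (fun m => lpadd (lpadd (lpadd (lpmul (H i m) (T m j k l))
    (lpmul (H j m) (T i m k l))) (lpmul (H k m) (T i j m l))) (lpmul (H l m) (T i j k m)))).
Definition sKN (A E : smx) : stensor := fun i j k l =>
  lpsub (lpsub (lpadd (lpmul (A i l) (E j k)) (lpmul (A j k) (E i l)))
               (lpmul (A i k) (E j l))) (lpmul (A j l) (E i k)).
Definition slower (G : smx) (H : stensor) : stensor :=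
  fun i j k l => ssum4 (fun m => lpmul (H i j k m) (G m l)).
Definition scompat (T : stensor) (E : smx) : stensor := fun i a j k =>
  ssum4 (fun p => lpadd (lpadd (lpmul (E i p) (T p a j k)) (lpmul (E j p) (T p a k i)))
                        (lpmul (E k p) (T p a i j))).

Definition stadd (S T : stensor) : stensor := fun i j k l => lpadd (S i j k l) (T i j k l).
Definition stscale (c : lpoly) (T : stensor) : stensor := fun i j k l => lpmul c (T i j k l).

Definition smx_eq (A B : smx) : Prop := forall i j, lp_eq0 (lpsub (A i j) (B i j)).
Definition stensor_eq (S T : stensor) : Prop :=
  forall i j k l, lp_eq0 (lpsub (S i j k l) (T i j k l)).

(* Tensors of the metric are computed into such tables once, by [vm_compute]
   at definition time, so that later checks look entries up instead of
   recomputing them. *)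
Definition ord4_enum : seq 'I_4 := [:: i_t; i_phi; i_r; i_z].
Definition table2 (f : smx) := map (fun i => map (fun j => lpnorm (f i j)) ord4_enum) ord4_enum.
Definition table3 (f : 'I_4 -> smx) := map (fun i => table2 (f i)) ord4_enum.
Definition table4 (f : stensor) := map (fun i => table3 (f i)) ord4_enum.
Definition entry2 T (i j : 'I_4) : lpoly := nth [::] (nth [::] T i) j.
Definition entry3 T (i j k : 'I_4) : lpoly := nth [::] (nth [::] (nth [::] T i) j) k.
Definition entry4 T (i j k l : 'I_4) : lpoly :=
  nth [::] (nth [::] (nth [::] (nth [::] T i) j) k) l.

Lemma ord4_ind (P : 'I_4 -> Prop) : P i_t -> P i_phi -> P i_r -> P i_z -> forall i, P i.
Proof.
move=> h0 h1 h2 h3 [[|[|[|[|n]]]] Hi] //.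
- by rewrite (_ : Ordinal Hi = i_t) //; apply: val_inj.
- by rewrite (_ : Ordinal Hi = i_phi) //; apply: val_inj.
- by rewrite (_ : Ordinal Hi = i_r) //; apply: val_inj.
- by rewrite (_ : Ordinal Hi = i_z) //; apply: val_inj.
Qed.

Lemma all_ord4P (f : 'I_4 -> bool) : all_ord4 f -> forall i, f i.
Proof. by case/and4P => h0 h1 h2 h3; apply: ord4_ind. Qed.

Lemma all_ord4P2 (f : 'I_4 -> 'I_4 -> bool) :
  all_ord4 (fun i => all_ord4 (f i)) -> forall i j, f i j.
Proof. by move/all_ord4P => h i; apply/all_ord4P/h. Qed.

Lemma all_ord4P3 (f : 'I_4 -> 'I_4 -> 'I_4 -> bool) :
  all_ord4 (fun i => all_ord4 (fun j => all_ord4 (f i j))) -> forall i j k, f i j k.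
Proof. by move/all_ord4P => h i; apply/all_ord4P2/h. Qed.

Lemma all_ord4P4 (f : 'I_4 -> 'I_4 -> 'I_4 -> 'I_4 -> bool) :
  all_ord4 (fun i => all_ord4 (fun j => all_ord4 (fun k => all_ord4 (f i j k)))) ->
  forall i j k l, f i j k l.
Proof. by move/all_ord4P => h i; apply/all_ord4P3/h. Qed.

Lemma all_ord4P6 (f : 'I_4 -> 'I_4 -> 'I_4 -> 'I_4 -> 'I_4 -> 'I_4 -> bool) :
  all_ord4 (fun i => all_ord4 (fun j => all_ord4 (fun k =>
    all_ord4 (fun l => all_ord4 (fun m => all_ord4 (f i j k l m)))))) ->
  forall i j k l m n, f i j k l m n.
Proof. by move/all_ord4P2 => h i j; apply/all_ord4P4/h. Qed.

Lemma nth_ord4_enum (i : 'I_4) : nth i_t ord4_enum i = i.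
Proof. by elim/ord4_ind: i. Qed.

Lemma entry2_table (f : smx) i j : entry2 (table2 f) i j = lpnorm (f i j).
Proof.
rewrite /entry2 /table2 (nth_map i_t) ?size_map ?ltn_ord // (nth_map i_t) ?ltn_ord //.
by rewrite !nth_ord4_enum.
Qed.

Lemma entry3_table (f : 'I_4 -> smx) i j k : entry3 (table3 f) i j k = lpnorm (f i j k).
Proof. by rewrite /entry3 /table3 (nth_map i_t) ?ltn_ord // nth_ord4_enum; exact: entry2_table. Qed.

Lemma entry4_table (f : stensor) i j k l : entry4 (table4 f) i j k l = lpnorm (f i j k l).
Proof. by rewrite /entry4 /table4 (nth_map i_t) ?ltn_ord // nth_ord4_enum; exact: entry3_table. Qed.

Section Representation.
Variables (R : realType) (a r : R).
Hypotheses (a_neq0 : a != 0) (r_neq0 : r != 0).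
Local Notation lpeval := (lpeval a r).
Let lpevalM := lpevalM a_neq0 r_neq0.

Definition mx_repr (A : 'M[R]_4) (As : smx) := forall i j, A i j = lpeval (As i j).
Definition vec_repr (u : 'rV[R]_4) (us : svec) := forall j, u 0 j = lpeval (us j).
Definition tensor_repr (T : T4 R) (Ts : stensor) :=
  forall i j k l, T i j k l = lpeval (Ts i j k l).

Lemma big_ord4 (F : 'I_4 -> R) : \sum_(m < 4) F m = F i_t + F i_phi + F i_r + F i_z.
Proof.
rewrite !big_ord_recl big_ord0 addr0 !addrA.
by congr (_ + _ + _ + _); congr F; apply: val_inj.
Qed.

Lemma sum_repr (F : 'I_4 -> R) Fs : (forall m, F m = lpeval (Fs m)) ->
  \sum_(m < 4) F m = lpeval (ssum4 Fs).
Proof. by move=> h; rewrite big_ord4 /ssum4 !lpevalD !h !addrA. Qed.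

Lemma mx_repr_mul A B As Bs : mx_repr A As -> mx_repr B Bs -> mx_repr (A *m B) (smxmul As Bs).
Proof. by move=> hA hB i j; rewrite mxE; apply: sum_repr => k; rewrite lpevalM hA hB. Qed.

Lemma vec_repr_mul u A us As : vec_repr u us -> mx_repr A As -> vec_repr (u *m A) (svmul us As).
Proof. by move=> hu hA j; rewrite mxE; apply: sum_repr => k; rewrite lpevalM hu hA. Qed.

Lemma mx_repr_tr A As : mx_repr A As -> mx_repr A^T (smxtr As).
Proof. by move=> hA i j; rewrite mxE hA. Qed.

Lemma mx_repr_add A B As Bs : mx_repr A As -> mx_repr B Bs -> mx_repr (A + B) (smxadd As Bs).
Proof. by move=> hA hB i j; rewrite mxE lpevalD hA hB. Qed.

Lemma mx_repr_sub A B As Bs : mx_repr A As -> mx_repr B Bs -> mx_repr (A - B) (smxsub As Bs).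
Proof. by move=> hA hB i j; rewrite !mxE lpevalB hA hB. Qed.

Lemma mx_repr_scale c A cs As : c = lpeval cs -> mx_repr A As -> mx_repr (c *: A) (smxscale cs As).
Proof. by move=> hc hA i j; rewrite mxE lpevalM hA hc. Qed.

Lemma vec_repr_add u v us vs : vec_repr u us -> vec_repr v vs -> vec_repr (u + v) (svadd us vs).
Proof. by move=> hu hv j; rewrite mxE lpevalD hu hv. Qed.

Lemma vec_repr_scale c u cs us : c = lpeval cs -> vec_repr u us -> vec_repr (c *: u) (svscale cs us).
Proof. by move=> hc hu j; rewrite mxE lpevalM hu hc. Qed.

Lemma vec_repr_ecoord i : vec_repr (ecoord R i) (sdelta i).
Proof. by move=> j; rewrite /ecoord /sdelta mxE eqxx /=; case: (j == i); rewrite ?lpeval1 ?lpeval0. Qed.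

Lemma mx_repr_wedge A u v As us vs : mx_repr A As -> vec_repr u us -> vec_repr v vs ->
  mx_repr (wedgeE A u v) (swedge As us vs).
Proof.
move=> hA hu hv c m; rewrite mxE lpevalB !lpevalM.
by rewrite (vec_repr_mul hv hA) (vec_repr_mul hu hA) hu hv.
Qed.

Lemma mx_repr_tens P Q Ps Qs : vec_repr P Ps -> vec_repr Q Qs -> mx_repr (tens P Q) (stens Ps Qs).
Proof. by move=> hP hQ i j; rewrite mxE big_ord1 !mxE lpevalM -hP -hQ. Qed.

Lemma tensor_repr_dot H T Hs Ts : mx_repr H Hs -> tensor_repr T Ts -> tensor_repr (dotT H T) (sdot Hs Ts).
Proof.
move=> hH hT i j k l; rewrite /dotT /sdot lpevalN; congr (- _).
by apply: sum_repr => m; rewrite !lpevalD !lpevalM !hH !hT.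
Qed.

Lemma tensor_repr_add T T' Ts Ts' : tensor_repr T Ts -> tensor_repr T' Ts' ->
  tensor_repr (fun i j k l => T i j k l + T' i j k l) (stadd Ts Ts').
Proof. by move=> hT hT' i j k l; rewrite lpevalD hT hT'. Qed.

Lemma tensor_repr_scale c T cs Ts : c = lpeval cs -> tensor_repr T Ts ->
  tensor_repr (fun i j k l => c * T i j k l) (stscale cs Ts).
Proof. by move=> hc hT i j k l; rewrite lpevalM hc hT. Qed.

Lemma mx_repr_eq A B As Bs : mx_repr A As -> mx_repr B Bs -> smx_eq As Bs -> A = B.
Proof. by move=> hA hB hAB; apply/matrixP => i j; rewrite hA hB; apply: lp_eq0_eval. Qed.

Lemma tensor_repr_eq T T' Ts Ts' : tensor_repr T Ts -> tensor_repr T' Ts' ->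
  stensor_eq Ts Ts' -> forall i j k l, T i j k l = T' i j k l.
Proof. by move=> hT hT' hTT' i j k l; rewrite hT hT'; apply: lp_eq0_eval. Qed.

Lemma tensor_repr_KN A E As Es : mx_repr A As -> mx_repr E Es -> tensor_repr (KN A E) (sKN As Es).
Proof. by move=> hA hE i j k l; rewrite /KN /sKN !lpevalB !lpevalD !lpevalM !hA !hE. Qed.

Lemma tensor_repr_lower (G : pt R -> 'M[R]_4) x (H : 'I_4 -> 'I_4 -> 'M[R]_4) Gs Hs :
  mx_repr (G x) Gs -> tensor_repr (fun i j k l => H i j k l) Hs ->
  tensor_repr (lower G x H) (slower Gs Hs).
Proof.
move=> hG hH i j k l; rewrite /lower /slower; apply: sum_repr => m.
by rewrite lpevalM -hG -(hH i j k m).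
Qed.

Lemma compatible_repr T E Ts Es : tensor_repr T Ts -> mx_repr E Es ->
  (forall i a j k, lp_eq0 (scompat Ts Es i a j k)) -> compatible T E.
Proof.
move=> hT hE hz i a' j k; transitivity (lpeval (scompat Ts Es i a' j k)).
  by apply: sum_repr => p; rewrite !lpevalD !lpevalM !hT !hE.
exact: lp_eq0P (hz i a' j k).
Qed.

Lemma mxtrace_repr A As : mx_repr A As -> \tr A = lpeval (smxtrace As).
Proof. by move=> hA; apply: sum_repr => i; rewrite hA. Qed.

Lemma mx_repr_table A S : mx_repr A S -> mx_repr A (entry2 (table2 S)).
Proof. by move=> h i j; rewrite entry2_table lpeval_norm h. Qed.

Lemma tensor_repr_table T S : tensor_repr T S -> tensor_repr T (entry4 (table4 S)).
Proof. by move=> h i j k l; rewrite entry4_table lpeval_norm h. Qed.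

Lemma op_repr_table (H : 'I_4 -> 'I_4 -> 'M[R]_4) (S : stensor) :
  (forall a' b, mx_repr (H a' b) (S a' b)) -> forall a' b, mx_repr (H a' b) (entry4 (table4 S) a' b).
Proof. by move=> h a' b i j; rewrite entry4_table lpeval_norm h. Qed.

End Representation.

Ltac repr := repeat first [ assumption
  | apply: mx_repr_sub | apply: mx_repr_add | apply: mx_repr_mul | apply: mx_repr_tr
  | apply: mx_repr_scale | apply: mx_repr_wedge | apply: mx_repr_tens
  | apply: vec_repr_add | apply: vec_repr_scale | apply: vec_repr_mul | apply: vec_repr_ecoord
  | reflexivity ].

(** * Curvature of the Som-Raychaudhuri metric *)

Definition sr_theta : svec := svadd (sdelta i_t) (svscale (lpmonom 1 2 (Qmake 1 1)) (sdelta i_phi)).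
Definition sr_metric : smx :=
  smxsub (smxsub (smxsub (stens sr_theta sr_theta)
    (smxscale (lpmonom 0 2 (Qmake 1 1)) (stens (sdelta i_phi) (sdelta i_phi))))
    (stens (sdelta i_r) (sdelta i_r))) (stens (sdelta i_z) (sdelta i_z)).
Definition sr_metric_inv : smx := fun i j =>
  match nat_of_ord i, nat_of_ord j with
  | 0, 0 => [:: Monom 0 0 false (Qmake 1 1); Monom 2 2 false (Qmake (-1) 1)]
  | 0, 1 | 1, 0 => lpmonom 1 0 (Qmake 1 1)
  | 1, 1 => lpmonom 0 (-2) (Qmake (-1) 1)
  | 2, 2 | 3, 3 => lpC (Qmake (-1) 1)
  | _, _ => lp0
  end.

Definition sr_Gam (k i j : 'I_4) : lpoly :=
  lpmul (lpC (Qmake 1 2)) (ssum4 (fun l => lpmul (sr_metric_inv k l)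
    (lpsub (lpadd (lppartial i (sr_metric j l)) (lppartial j (sr_metric i l)))
           (lppartial l (sr_metric i j))))).
Definition Gam_tab := Eval vm_compute in table3 sr_Gam.

Definition sr_Rop : stensor := fun a b c p =>
  lpadd (lpsub (lppartial a (entry3 Gam_tab p b c)) (lppartial b (entry3 Gam_tab p a c)))
    (ssum4 (fun m => lpsub (lpmul (entry3 Gam_tab m b c) (entry3 Gam_tab p a m))
                           (lpmul (entry3 Gam_tab m a c) (entry3 Gam_tab p b m)))).
Definition Rop_tab := Eval vm_compute in table4 sr_Rop.
Definition Rt_tab := Eval vm_compute in table4 (slower sr_metric (entry4 Rop_tab)).

Definition sr_Ric : smx := fun b c => ssum4 (fun a => entry4 Rop_tab a b c a).
Definition Ric_tab := Eval vm_compute in table2 sr_Ric.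
Definition Sop_tab := Eval vm_compute in table2 (smxtr (smxmul sr_metric_inv (entry2 Ric_tab))).
Definition kappa_tab := Eval vm_compute in lpnorm (smxtrace (smxmul sr_metric_inv (entry2 Ric_tab))).
Definition Ric2_tab :=
  Eval vm_compute in table2 (smxmul (smxmul (entry2 Ric_tab) sr_metric_inv) (entry2 Ric_tab)).
Definition Ric3_tab := Eval vm_compute in
  table2 (smxmul (smxmul (smxmul (smxmul (entry2 Ric_tab) sr_metric_inv) (entry2 Ric_tab))
                         sr_metric_inv) (entry2 Ric_tab)).

Definition sr_nablaS (i j k : 'I_4) : lpoly :=
  lpsub (lppartial i (entry2 Ric_tab j k))
    (ssum4 (fun m => lpadd (lpmul (entry3 Gam_tab m i j) (entry2 Ric_tab m k))
                           (lpmul (entry3 Gam_tab m i k) (entry2 Ric_tab j m)))).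

Definition sr_S_wedge (a b : 'I_4) : smx :=
  smxadd (swedge sr_metric (sdelta a) (svmul (sdelta b) (entry2 Sop_tab)))
         (swedge sr_metric (svmul (sdelta a) (entry2 Sop_tab)) (sdelta b)).
Definition sr_Cop : stensor := fun a b =>
  smxsub (entry4 Rop_tab a b) (smxscale (lpC (Qmake 1 2))
    (smxsub (sr_S_wedge a b)
      (smxscale (lpmul kappa_tab (lpC (Qmake 1 3))) (swedge sr_metric (sdelta a) (sdelta b))))).
Definition sr_Wop : stensor := fun a b =>
  smxsub (entry4 Rop_tab a b)
    (smxscale (lpmul kappa_tab (lpC (Qmake 1 12))) (swedge sr_metric (sdelta a) (sdelta b))).
Definition sr_Kop : stensor := fun a b =>
  smxsub (entry4 Rop_tab a b) (smxscale (lpC (Qmake 1 2)) (sr_S_wedge a b)).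
Definition Cop_tab := Eval vm_compute in table4 sr_Cop.
Definition Wop_tab := Eval vm_compute in table4 sr_Wop.
Definition Kop_tab := Eval vm_compute in table4 sr_Kop.
Definition Ct_tab := Eval vm_compute in table4 (slower sr_metric (entry4 Cop_tab)).
Definition Wt_tab := Eval vm_compute in table4 (slower sr_metric (entry4 Wop_tab)).
Definition Kt_tab := Eval vm_compute in table4 (slower sr_metric (entry4 Kop_tab)).

Lemma Gam_tabE : Gam_tab = table3 sr_Gam. Proof. by vm_compute. Qed.
Lemma Rop_tabE : Rop_tab = table4 sr_Rop. Proof. by vm_compute. Qed.
Lemma Rt_tabE : Rt_tab = table4 (slower sr_metric (entry4 Rop_tab)). Proof. by vm_compute. Qed.
Lemma Ric_tabE : Ric_tab = table2 sr_Ric. Proof. by vm_compute. Qed.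
Lemma Sop_tabE : Sop_tab = table2 (smxtr (smxmul sr_metric_inv (entry2 Ric_tab))).
Proof. by vm_compute. Qed.
Lemma kappa_tabE : kappa_tab = lpnorm (smxtrace (smxmul sr_metric_inv (entry2 Ric_tab))).
Proof. by vm_compute. Qed.
Lemma Ric2_tabE :
  Ric2_tab = table2 (smxmul (smxmul (entry2 Ric_tab) sr_metric_inv) (entry2 Ric_tab)).
Proof. by vm_compute. Qed.
Lemma Ric3_tabE : Ric3_tab =
  table2 (smxmul (smxmul (smxmul (smxmul (entry2 Ric_tab) sr_metric_inv) (entry2 Ric_tab))
                         sr_metric_inv) (entry2 Ric_tab)).
Proof. by vm_compute. Qed.
Lemma Cop_tabE : Cop_tab = table4 sr_Cop. Proof. by vm_compute. Qed.
Lemma Wop_tabE : Wop_tab = table4 sr_Wop. Proof. by vm_compute. Qed.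
Lemma Kop_tabE : Kop_tab = table4 sr_Kop. Proof. by vm_compute. Qed.
Lemma Ct_tabE : Ct_tab = table4 (slower sr_metric (entry4 Cop_tab)). Proof. by vm_compute. Qed.
Lemma Wt_tabE : Wt_tab = table4 (slower sr_metric (entry4 Wop_tab)). Proof. by vm_compute. Qed.
Lemma Kt_tabE : Kt_tab = table4 (slower sr_metric (entry4 Kop_tab)). Proof. by vm_compute. Qed.

Lemma sr_metric_inv_right : smx_eq (smxmul sr_metric sr_metric_inv) (fun i j => sdelta j i).
Proof. by apply: all_ord4P2; vm_compute. Qed.

Section CurvatureRepresentation.
Variables (R : realType) (a : R).
Hypothesis a_neq0 : a != 0.
Local Notation g := (SR_metric a).

Lemma metric_repr (y : pt R) : y 0 i_r != 0 -> mx_repr a (y 0 i_r) (g y) sr_metric.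
Proof.
move=> r_neq0; rewrite /SR_metric /sr_metric /sr_theta; repr.
all: rewrite lpeval_monom /qeval /zeval /= divr1 mul1r //.
by rewrite expr0z mul1r.
Qed.

Lemma ginv_repr (y : pt R) : y 0 i_r != 0 -> mx_repr a (y 0 i_r) (ginv g y) sr_metric_inv.
Proof.
move=> r_neq0.
pose Gi := \matrix_(i, j) lpeval a (y 0 i_r) (sr_metric_inv i j).
have hGi : mx_repr a (y 0 i_r) Gi sr_metric_inv by move=> i j; rewrite mxE.
have hm := mx_repr_mul a_neq0 r_neq0 (metric_repr r_neq0) hGi.
have gGi : g y *m Gi = 1%:M.
  apply: (mx_repr_eq hm _ sr_metric_inv_right) => i j.
  by rewrite /sdelta !mxE; case: (i == j); rewrite ?lpeval1 ?lpeval0.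
have [g_unit _] := mulmx1_unit gGi.
by rewrite /ginv -[invmx _]mulmx1 -gGi mulmxA mulVmx // mul1mx.
Qed.

Lemma Gam_repr (y : pt R) : y 0 i_r != 0 ->
  forall k i j, Gam g y k i j = lpeval a (y 0 i_r) (entry3 Gam_tab k i j).
Proof.
move=> r_neq0 k i j.
have dg_repr k' i' j' : dg g k' i' j' y = lpeval a (y 0 i_r) (lppartial k' (sr_metric i' j')).
  have hf (z : pt R) : z 0 i_r != 0 -> g z i' j' = lpeval a (z 0 i_r) (sr_metric i' j').
    by move=> hz; rewrite (metric_repr hz).
  by case: (partial_lpeval r_neq0 hf k').
rewrite Gam_tabE entry3_table lpeval_norm /Gam /sr_Gam.
rewrite (lpevalM a_neq0 r_neq0) lpevalC; congr (_ * _).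
  by rewrite /qeval /zeval /= mul1r.
apply: sum_repr => l; rewrite (lpevalM a_neq0 r_neq0) lpevalB lpevalD !dg_repr.
by rewrite -ginv_repr.
Qed.

Lemma Rop_repr (y : pt R) : y 0 i_r != 0 ->
  forall a' b, mx_repr a (y 0 i_r) (Rop g y a' b) (entry4 Rop_tab a' b).
Proof.
move=> r_neq0; rewrite Rop_tabE; apply: op_repr_table => a' b c p.
rewrite /Rop mxE /sr_Rop lpevalD lpevalB.
have hf p' b' c' (z : pt R) : z 0 i_r != 0 ->
    Gam g z p' b' c' = lpeval a (z 0 i_r) (entry3 Gam_tab p' b' c').
  by move=> hz; rewrite (Gam_repr hz).
case: (partial_lpeval r_neq0 (hf p b c) a') => -> _.
case: (partial_lpeval r_neq0 (hf p a' c) b) => -> _.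
congr (_ - _ + _); apply: sum_repr => m.
by rewrite lpevalB !(lpevalM a_neq0 r_neq0) !(Gam_repr r_neq0).
Qed.

Lemma Rt_repr (y : pt R) : y 0 i_r != 0 -> tensor_repr a (y 0 i_r) (Rt g y) (entry4 Rt_tab).
Proof.
move=> r_neq0; rewrite Rt_tabE; apply: tensor_repr_table.
by apply: (tensor_repr_lower a_neq0 r_neq0 (metric_repr r_neq0)) => i j k l; exact: Rop_repr.
Qed.

Lemma Ric_repr (y : pt R) : y 0 i_r != 0 -> mx_repr a (y 0 i_r) (Ric g y) (entry2 Ric_tab).
Proof.
move=> r_neq0; rewrite Ric_tabE; apply: mx_repr_table => b c.
by rewrite /Ric mxE; apply: sum_repr => a'; exact: Rop_repr.
Qed.

Lemma Sop_repr (y : pt R) : y 0 i_r != 0 -> mx_repr a (y 0 i_r) (Sop g y) (entry2 Sop_tab).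
Proof.
move=> r_neq0; rewrite Sop_tabE; apply: mx_repr_table.
exact: mx_repr_tr (mx_repr_mul a_neq0 r_neq0 (ginv_repr r_neq0) (Ric_repr r_neq0)).
Qed.

Lemma kappa_repr (y : pt R) : y 0 i_r != 0 -> kappa g y = lpeval a (y 0 i_r) kappa_tab.
Proof.
move=> r_neq0; rewrite kappa_tabE lpeval_norm.
exact: mxtrace_repr (mx_repr_mul a_neq0 r_neq0 (ginv_repr r_neq0) (Ric_repr r_neq0)).
Qed.

Lemma Ric2_repr (y : pt R) : y 0 i_r != 0 -> mx_repr a (y 0 i_r) (Ric2 g y) (entry2 Ric2_tab).
Proof.
move=> r_neq0; rewrite Ric2_tabE; apply: mx_repr_table.
have := ginv_repr r_neq0; have := Ric_repr r_neq0; move=> h1 h2; repr.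
Qed.

Lemma Ric3_repr (y : pt R) : y 0 i_r != 0 -> mx_repr a (y 0 i_r) (Ric3 g y) (entry2 Ric3_tab).
Proof.
move=> r_neq0; rewrite Ric3_tabE; apply: mx_repr_table.
have := ginv_repr r_neq0; have := Ric_repr r_neq0; move=> h1 h2; repr.
Qed.

Lemma nablaS_repr (y : pt R) : y 0 i_r != 0 ->
  forall i j k, nablaS g y i j k = lpeval a (y 0 i_r) (sr_nablaS i j k).
Proof.
move=> r_neq0 i j k; rewrite /nablaS /sr_nablaS lpevalB.
have hf j' k' (z : pt R) : z 0 i_r != 0 ->
    Ric g z j' k' = lpeval a (z 0 i_r) (entry2 Ric_tab j' k').
  by move=> hz; rewrite (Ric_repr hz).
case: (partial_lpeval r_neq0 (hf j k) i) => -> _.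
congr (_ - _); apply: sum_repr => m.
by rewrite lpevalD !(lpevalM a_neq0 r_neq0) !(Gam_repr r_neq0) !(Ric_repr r_neq0).
Qed.

Lemma qeval_half : qeval R (Qmake 1 2) = (nR R - 2)^-1.
Proof.
by rewrite (_ : nR R - 2 = 2); [rewrite /qeval /zeval /= mul1r | rewrite /nR; lra].
Qed.

Lemma Cop_repr (y : pt R) : y 0 i_r != 0 ->
  forall a' b, mx_repr a (y 0 i_r) (Cop g y a' b) (entry4 Cop_tab a' b).
Proof.
move=> r_neq0; rewrite Cop_tabE; apply: op_repr_table => a' b.
have hG := metric_repr r_neq0; have hS := Sop_repr r_neq0; have hR := Rop_repr r_neq0 a' b.
rewrite /Cop /sr_Cop /sr_S_wedge; repr; rewrite ?(lpevalM a_neq0 r_neq0) lpevalC.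
  by rewrite qeval_half.
rewrite -(kappa_repr r_neq0) (_ : nR R - 1 = 3); last by rewrite /nR; lra.
by rewrite /qeval /zeval /= mul1r.
Qed.

Lemma Wop_repr (y : pt R) : y 0 i_r != 0 ->
  forall a' b, mx_repr a (y 0 i_r) (Wop g y a' b) (entry4 Wop_tab a' b).
Proof.
move=> r_neq0; rewrite Wop_tabE; apply: op_repr_table => a' b.
have hG := metric_repr r_neq0; have hR := Rop_repr r_neq0 a' b.
rewrite /Wop /sr_Wop; repr; rewrite (lpevalM a_neq0 r_neq0) lpevalC.
rewrite -(kappa_repr r_neq0) (_ : nR R * (nR R - 1) = 12); last by rewrite /nR; lra.
by rewrite /qeval /zeval /= mul1r.
Qed.

Lemma Kop_repr (y : pt R) : y 0 i_r != 0 ->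
  forall a' b, mx_repr a (y 0 i_r) (Kop g y a' b) (entry4 Kop_tab a' b).
Proof.
move=> r_neq0; rewrite Kop_tabE; apply: op_repr_table => a' b.
have hG := metric_repr r_neq0; have hS := Sop_repr r_neq0; have hR := Rop_repr r_neq0 a' b.
by rewrite /Kop /sr_Kop /sr_S_wedge; repr; rewrite lpevalC qeval_half.
Qed.

Lemma Ct_repr (y : pt R) : y 0 i_r != 0 -> tensor_repr a (y 0 i_r) (Ct g y) (entry4 Ct_tab).
Proof.
move=> r_neq0; rewrite Ct_tabE; apply: tensor_repr_table.
by apply: (tensor_repr_lower a_neq0 r_neq0 (metric_repr r_neq0)) => i j k l; exact: Cop_repr.
Qed.

Lemma Wt_repr (y : pt R) : y 0 i_r != 0 -> tensor_repr a (y 0 i_r) (Wt g y) (entry4 Wt_tab).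
Proof.
move=> r_neq0; rewrite Wt_tabE; apply: tensor_repr_table.
by apply: (tensor_repr_lower a_neq0 r_neq0 (metric_repr r_neq0)) => i j k l; exact: Wop_repr.
Qed.

Lemma Kt_repr (y : pt R) : y 0 i_r != 0 -> tensor_repr a (y 0 i_r) (Kt g y) (entry4 Kt_tab).
Proof.
move=> r_neq0; rewrite Kt_tabE; apply: tensor_repr_table.
by apply: (tensor_repr_lower a_neq0 r_neq0 (metric_repr r_neq0)) => i j k l; exact: Kop_repr.
Qed.

End CurvatureRepresentation.

Lemma rank_tens_le1 (R : realType) (P Q : 'rV[R]_4) : leq (\rank (tens P Q)) 1%N.
Proof. exact: leq_trans (mxrankM_maxl _ _) (rank_leq_col _). Qed.

Lemma sum_delta_l (F : fieldType) n (G : 'I_n -> F) (s : 'I_n) :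
  \sum_(m < n) (m == s)%:R * G m = G s.
Proof. by rewrite (bigD1 s) //= eqxx mul1r big1 ?addr0 // => m /negbTE ->; rewrite mul0r. Qed.

Lemma rank_ge2 (F : fieldType) n (A : 'M[F]_n) (i j : 'I_n) :
  A i j = 0 -> A j i = 0 -> A i i != 0 -> A j j != 0 -> leq 2%N (\rank A).
Proof.
move=> Aij Aji Aii Ajj.
pose sel (k : 'I_2) := if k == 0 then i else j.
pose P := \matrix_(k < 2, m < n) ((m == sel k)%:R / A (sel k) (sel k)).
pose Q : 'M[F]_(n, 2) := \matrix_(m, k) (m == sel k)%:R.
apply: (mulmx1_min_rank (M := P) (N := Q)); apply/matrixP => k k'.
have PA m : (P *m A) k m = A (sel k) m / A (sel k) (sel k).
  rewrite mxE; transitivity (\sum_m' (m' == sel k)%:R * (A m' m / A (sel k) (sel k))).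
    by apply: eq_bigr => m' _; rewrite mxE mulrAC -mulrA.
  exact: sum_delta_l.
rewrite mxE (eq_bigr (fun m => (m == sel k')%:R * (A (sel k) m / A (sel k) (sel k)))); last first.
  by move=> m _; rewrite PA mxE mulrC.
rewrite sum_delta_l !mxE /sel; clear PA.
by case: k k' => -[|[|//]] ? [[|[|//]] ?] /=; rewrite ?divff ?Aij ?Aji ?mul0r.
Qed.

Definition sr_dz : svec := sdelta i_z.
Definition sr_alpha : lpoly := lpmonom 2 0 (Qmake (-2) 1).
Definition sr_beta : lpoly := lpmonom 2 0 (Qmake 4 1).

Definition ssharp (u : svec) : svec := svmul u (smxtr sr_metric_inv).
Definition sgprod (u v : svec) : lpoly := ssum4 (fun k => lpmul (svmul u sr_metric k) (v k)).

Lemma sr_Ric_cyclic_parallel i j k :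
  lp_eq0 (lpadd (lpadd (sr_nablaS i j k) (sr_nablaS j k i)) (sr_nablaS k i j)).
Proof. by move: i j k; apply: all_ord4P3; vm_compute. Qed.

Lemma sr_Ric_decomposition : smx_eq (entry2 Ric_tab)
  (smxadd (smxadd (smxscale sr_alpha sr_metric)
    (smxscale sr_beta (stens sr_theta sr_theta)))
    (smxscale sr_alpha (stens sr_dz sr_dz))).
Proof. by apply: all_ord4P2; vm_compute. Qed.

Lemma sr_theta_dz_orthogonal : lp_eq0 (sgprod (ssharp sr_theta) (ssharp sr_dz)).
Proof. by vm_compute. Qed.

Lemma sr_Ric_shifted_minor :
  let N := smxsub (entry2 Ric_tab) (smxscale sr_alpha sr_metric) in
  [/\ lp_eq0 (N i_t i_z), lp_eq0 (N i_z i_t),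
      lp_eq0 (lpsub (lpmul (N i_t i_t) (lpmonom (-2) 0 (Qmake 1 4))) lp1) &
      lp_eq0 (lpsub (lpmul (N i_z i_z) (lpmonom (-2) 0 (Qmake (-1) 2))) lp1)].
Proof. by vm_compute. Qed.

Definition ein3_a4 : lpoly := lpmonom 4 0 (Qmake (-4) 1).

Lemma sr_Ein3 : smx_eq
  (smxadd (smxadd (smxadd (entry2 Ric3_tab) (smxscale lp0 (entry2 Ric2_tab)))
    (smxscale ein3_a4 (entry2 Ric_tab))) (smxscale lp0 sr_metric))
  (fun _ _ => lp0).
Proof. by apply: all_ord4P2; vm_compute. Qed.

Definition chaki_Pi : svec := svadd (svscale lpsqrt2 sr_theta) sr_dz.
Definition chaki_Phi : svec := svadd sr_theta (svscale lpsqrt2 sr_dz).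
Definition chaki_beta : lpoly := lpmonom 2 0 (Qmake 6 1).
Definition chaki_gamma : lpoly := lpmul sr_alpha lpsqrt2.

Lemma sr_Chaki_decomposition : smx_eq (entry2 Ric_tab)
  (smxadd (smxadd (smxscale sr_alpha sr_metric)
    (smxscale chaki_beta (stens chaki_Pi chaki_Pi)))
    (smxscale chaki_gamma (smxadd (stens chaki_Pi chaki_Phi) (stens chaki_Phi chaki_Pi)))).
Proof. by apply: all_ord4P2; vm_compute. Qed.

Lemma sr_Chaki_orthogonal : lp_eq0 (sgprod (ssharp chaki_Pi) (ssharp chaki_Phi)).
Proof. by vm_compute. Qed.

Definition pseudo_alpha : lpoly := lpmonom 2 0 (Qmake (-4) 3).
Definition pseudo_beta : lpoly := lpmonom 2 0 (Qmake 10 3).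
Definition pseudo_E_tab := Eval vm_compute in
  table2 (smxsub (smxsub (entry2 Ric_tab) (smxscale pseudo_alpha sr_metric))
                 (smxscale pseudo_beta (stens sr_theta sr_theta))).

Lemma sr_pseudo_decomposition : smx_eq (entry2 Ric_tab)
  (smxadd (smxadd (smxscale pseudo_alpha sr_metric)
    (smxscale pseudo_beta (stens sr_theta sr_theta))) (smxscale lp1 (entry2 pseudo_E_tab))).
Proof. by apply: all_ord4P2; vm_compute. Qed.

Lemma sr_pseudo_E_sym : smx_eq (smxtr (entry2 pseudo_E_tab)) (entry2 pseudo_E_tab).
Proof. by apply: all_ord4P2; vm_compute. Qed.

Lemma sr_pseudo_E_tracefree : lp_eq0 (smxtrace (smxmul sr_metric_inv (entry2 pseudo_E_tab))).
Proof. by vm_compute. Qed.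

Lemma sr_pseudo_E_theta i :
  lp_eq0 (ssum4 (fun k => lpmul (entry2 pseudo_E_tab i k) (ssharp sr_theta k))).
Proof. by move: i; apply: all_ord4P; vm_compute. Qed.

Lemma sr_special_Ricci_pseudosymmetric a b :
  stensor_eq (sdot (entry4 Rop_tab a b) (entry4 Rt_tab))
             (sdot (swedge (entry2 Ric_tab) (sdelta a) (sdelta b)) (entry4 Rt_tab)).
Proof. by move: a b; apply: all_ord4P6; vm_compute. Qed.

Definition weyl_L : lpoly := lpmonom 2 0 (Qmake 2 3).

Lemma sr_Weyl_pseudosymmetric a b :
  stensor_eq (sdot (entry4 Cop_tab a b) (entry4 Ct_tab))
    (stscale weyl_L (sdot (swedge sr_metric (sdelta a) (sdelta b)) (entry4 Ct_tab))).
Proof. by move: a b; apply: all_ord4P6; vm_compute. Qed.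

Definition roter_L1 : lpoly := lpmonom 2 0 (Qmake 1 2).
Definition roter_L3 : lpoly := lpmonom (-2) 0 (Qmake (-1) 4).

Lemma sr_Roter : stensor_eq (entry4 Rt_tab)
  (stadd (stadd (stadd (stadd (stadd
    (stscale roter_L1 (sKN sr_metric sr_metric))
    (stscale lp0 (sKN sr_metric (entry2 Ric_tab))))
    (stscale roter_L3 (sKN (entry2 Ric_tab) (entry2 Ric_tab))))
    (stscale roter_L3 (sKN sr_metric (entry2 Ric2_tab))))
    (stscale lp0 (sKN (entry2 Ric_tab) (entry2 Ric2_tab))))
    (stscale lp0 (sKN (entry2 Ric2_tab) (entry2 Ric2_tab)))).
Proof. by apply: all_ord4P4; vm_compute. Qed.

Lemma sr_compatible_Rt i a j k : lp_eq0 (scompat (entry4 Rt_tab) (entry2 Sop_tab) i a j k).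
Proof. by move: i a j k; apply: all_ord4P4; vm_compute. Qed.

Lemma sr_compatible_Ct i a j k : lp_eq0 (scompat (entry4 Ct_tab) (entry2 Sop_tab) i a j k).
Proof. by move: i a j k; apply: all_ord4P4; vm_compute. Qed.

Lemma sr_compatible_Wt i a j k : lp_eq0 (scompat (entry4 Wt_tab) (entry2 Sop_tab) i a j k).
Proof. by move: i a j k; apply: all_ord4P4; vm_compute. Qed.

Lemma sr_compatible_Kt i a j k : lp_eq0 (scompat (entry4 Kt_tab) (entry2 Sop_tab) i a j k).
Proof. by move: i a j k; apply: all_ord4P4; vm_compute. Qed.

(** * The curvature conditions *)

Section SomRaychaudhuriProperties.
Variables (R : realType) (a : R).
Hypothesis a_neq0 : a != 0.
Local Notation g := (SR_metric a).
Local Notation M := (@SR_M R).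

Definition sr_scalar (p : lpoly) (y : pt R) : R := lpeval a (y 0 i_r) p.
Definition sr_covector (P : svec) (y : pt R) : 'rV[R]_4 := \row_j sr_scalar (P j) y.
Definition sr_field (P : smx) (y : pt R) : 'M[R]_4 := \matrix_(i, j) sr_scalar (P i j) y.

Lemma SR_M_r_neq0 x : M x -> x 0 i_r != 0.
Proof. by move=> hx; rewrite gt_eqF. Qed.

Lemma Uset_SR_M x : Uset g M x -> M x.
Proof. by case. Qed.

Lemma smooth_sr_scalar p : smooth_on M (sr_scalar p).
Proof. exact: smooth_lpeval. Qed.

Lemma smooth_Uset f : smooth_on M f -> smooth_on (Uset g M) f.
Proof. by move=> hf ds x /Uset_SR_M; exact: hf. Qed.

Lemma smooth_sr_covector P : smooth_vec_on (Uset g M) (sr_covector P).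
Proof. by move=> i; apply/smooth_Uset/smooth_lpeval => z _; rewrite mxE. Qed.

Lemma smooth_sr_field P : smooth_mx_on (Uset g M) (sr_field P).
Proof. by move=> i j; apply/smooth_Uset/smooth_lpeval => z _; rewrite mxE. Qed.

Lemma vec_repr_covector P (y : pt R) : vec_repr a (y 0 i_r) (sr_covector P y) P.
Proof. by move=> j; rewrite mxE. Qed.

Lemma mx_repr_field P (y : pt R) : mx_repr a (y 0 i_r) (sr_field P y) P.
Proof. by move=> i j; rewrite mxE. Qed.

Lemma sharp_repr (y : pt R) u us : y 0 i_r != 0 -> vec_repr a (y 0 i_r) u us ->
  vec_repr a (y 0 i_r) (sharp g y u) (ssharp us).
Proof. by move=> hr hu; exact: (vec_repr_mul a_neq0 hr hu (mx_repr_tr (ginv_repr a_neq0 hr))). Qed.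

Lemma gprod_repr (y : pt R) u v us vs : y 0 i_r != 0 ->
  vec_repr a (y 0 i_r) u us -> vec_repr a (y 0 i_r) v vs ->
  gprod g y u v = lpeval a (y 0 i_r) (sgprod us vs).
Proof.
move=> hr hu hv; rewrite /gprod mxE; apply: sum_repr => k.
by rewrite (lpevalM a_neq0 hr) -(vec_repr_mul a_neq0 hr hu (metric_repr a_neq0 hr) k) -hv !mxE.
Qed.

Lemma SR_Ricci_decomposition (x : pt R) : x 0 i_r != 0 ->
  Ric g x = sr_scalar sr_alpha x *: g x
    + sr_scalar sr_beta x *: tens (sr_covector sr_theta x) (sr_covector sr_theta x)
    + sr_scalar sr_alpha x *: tens (sr_covector sr_dz x) (sr_covector sr_dz x).
Proof.
move=> hr; apply: (mx_repr_eq (Ric_repr a_neq0 hr) _ sr_Ric_decomposition).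
have := metric_repr a_neq0 hr; have := vec_repr_covector sr_theta x.
have := vec_repr_covector sr_dz x; move=> *; repr.
Qed.

Lemma SR_Ricci_cyclic_parallel : Ricci_cyclic_parallel g M.
Proof.
move=> x /SR_M_r_neq0 hr i j k; rewrite !(nablaS_repr a_neq0 hr) -!lpevalD.
exact: lp_eq0P (sr_Ric_cyclic_parallel i j k).
Qed.

Lemma SR_2_quasi_Einstein : k_quasi_Einstein g M 2.
Proof.
exists (sr_scalar sr_alpha); split; first exact: smooth_sr_scalar.
move=> x /SR_M_r_neq0 hr; set N := Ric g x - _ *: g x.
apply/eqP; rewrite eqn_leq; apply/andP; split.
  have -> : N = sr_scalar sr_beta x *: tens (sr_covector sr_theta x) (sr_covector sr_theta x)
                + sr_scalar sr_alpha x *: tens (sr_covector sr_dz x) (sr_covector sr_dz x).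
    by rewrite /N (SR_Ricci_decomposition hr) addrC -addrA addKr.
  (* the [2] of the statement is the ring numeral [2%:R : nat] *)
  apply: (@leq_trans (addn 1 1)) => //; apply: (leq_trans (mxrank_add _ _) _).
  by apply: leq_add; exact: (leq_trans (mxrank_scale _ _) (rank_tens_le1 _ _)).
have hN : mx_repr a (x 0 i_r) N (smxsub (entry2 Ric_tab) (smxscale sr_alpha sr_metric)).
  by have := metric_repr a_neq0 hr; have := Ric_repr a_neq0 hr; move=> *; repr.
have [Ntz Nzt Ntt Nzz] := sr_Ric_shifted_minor.
apply: (rank_ge2 (i := i_t) (j := i_z)); rewrite hN.
- exact: lp_eq0P Ntz.
- exact: lp_eq0P Nzt.
- exact: (lpeval_neq0 a_neq0 hr Ntt).
- exact: (lpeval_neq0 a_neq0 hr Nzz).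
Qed.

Lemma SR_Ein3 : Ein3 g M.
Proof.
exists (sr_scalar lp0), (sr_scalar ein3_a4), (sr_scalar lp0).
split; try exact: smooth_sr_scalar.
move=> x /SR_M_r_neq0 hr; apply: (mx_repr_eq _ _ sr_Ein3).
  have := metric_repr a_neq0 hr; have := Ric_repr a_neq0 hr; have := Ric2_repr a_neq0 hr.
  by have := Ric3_repr a_neq0 hr; move=> *; repr.
by move=> i j; rewrite mxE lpeval0.
Qed.

Lemma SR_gen_quasi_Einstein_Chaki : gen_quasi_Einstein_Chaki g M.
Proof.
exists (sr_scalar sr_alpha), (sr_scalar chaki_beta), (sr_scalar chaki_gamma),
  (sr_covector chaki_Pi), (sr_covector chaki_Phi).
split; try exact/smooth_Uset/smooth_sr_scalar.
  by split; exact: smooth_sr_covector.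
move=> x /Uset_SR_M /SR_M_r_neq0 hr.
have hPi := vec_repr_covector chaki_Pi x; have hPhi := vec_repr_covector chaki_Phi x.
split.
  rewrite (gprod_repr hr (sharp_repr hr hPi) (sharp_repr hr hPhi)).
  exact: lp_eq0P sr_Chaki_orthogonal.
apply: (mx_repr_eq (Ric_repr a_neq0 hr) _ sr_Chaki_decomposition).
by have := metric_repr a_neq0 hr; move=> *; repr.
Qed.

Lemma SR_gen_quasi_Einstein_DeGhosh : gen_quasi_Einstein_DeGhosh g M.
Proof.
exists (sr_scalar sr_alpha), (sr_scalar sr_beta), (sr_scalar sr_alpha),
  (sr_covector sr_theta), (sr_covector sr_dz).
split; try exact/smooth_Uset/smooth_sr_scalar.
  by split; exact: smooth_sr_covector.
move=> x /Uset_SR_M /SR_M_r_neq0 hr; split; last exact: SR_Ricci_decomposition.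
rewrite (gprod_repr hr (sharp_repr hr (vec_repr_covector _ _)) (sharp_repr hr (vec_repr_covector _ _))).
exact: lp_eq0P sr_theta_dz_orthogonal.
Qed.

Lemma SR_pseudo_quasi_Einstein : pseudo_quasi_Einstein g M.
Proof.
exists (sr_scalar pseudo_alpha), (sr_scalar pseudo_beta), (sr_scalar lp1),
  (sr_covector sr_theta), (sr_field (entry2 pseudo_E_tab)).
split; try exact/smooth_Uset/smooth_sr_scalar.
  by split; [exact: smooth_sr_covector | exact: smooth_sr_field].
move=> x /Uset_SR_M /SR_M_r_neq0 hr.
have hE := mx_repr_field (entry2 pseudo_E_tab) x; have hth := vec_repr_covector sr_theta x.
split.
- by apply: (mx_repr_eq _ hE sr_pseudo_E_sym); repr.
- rewrite (mxtrace_repr (mx_repr_mul a_neq0 hr (ginv_repr a_neq0 hr) hE)).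
  exact: lp_eq0P sr_pseudo_E_tracefree.
- apply/matrixP => i j; rewrite (ord1 j) !mxE.
  transitivity (lpeval a (x 0 i_r)
    (ssum4 (fun k => lpmul (entry2 pseudo_E_tab i k) (ssharp sr_theta k)))).
    apply: sum_repr => k; rewrite (lpevalM a_neq0 hr) -hE.
    by rewrite -(sharp_repr hr hth) !mxE.
  exact: lp_eq0P (sr_pseudo_E_theta i).
- apply: (mx_repr_eq (Ric_repr a_neq0 hr) _ sr_pseudo_decomposition).
  by have := metric_repr a_neq0 hr; move=> *; repr.
Qed.

Lemma SR_special_Ricci_gen_pseudosymmetric : special_Ricci_gen_pseudosymmetric g M.
Proof.
move=> x /SR_M_r_neq0 hr i j k l a' b.
have hRt := Rt_repr a_neq0 hr.
apply: (tensor_repr_eq (tensor_repr_dot a_neq0 hr (Rop_repr a_neq0 hr a' b) hRt) _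
                      (sr_special_Ricci_pseudosymmetric a' b)).
apply: (tensor_repr_dot a_neq0 hr _ hRt).
exact: (mx_repr_wedge a_neq0 hr (Ric_repr a_neq0 hr) (vec_repr_ecoord _ _ a') (vec_repr_ecoord _ _ b)).
Qed.

Lemma SR_Weyl_pseudosymmetric : Weyl_pseudosymmetric g M.
Proof.
exists (sr_scalar weyl_L); split; first exact: smooth_sr_scalar.
move=> x /SR_M_r_neq0 hr i j k l a' b; move: i j k l.
have hCt := Ct_repr a_neq0 hr.
apply: (tensor_repr_eq (tensor_repr_dot a_neq0 hr (Cop_repr a_neq0 hr a' b) hCt) _
                      (sr_Weyl_pseudosymmetric a' b)).
apply: (tensor_repr_scale a_neq0 hr) => //; apply: (tensor_repr_dot a_neq0 hr _ hCt).
exact: (mx_repr_wedge a_neq0 hr (metric_repr a_neq0 hr) (vec_repr_ecoord _ _ a') (vec_repr_ecoord _ _ b)).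
Qed.

Lemma SR_gen_Roter_type : gen_Roter_type g M.
Proof.
exists (sr_scalar roter_L1), (sr_scalar lp0), (sr_scalar roter_L3), (sr_scalar roter_L3),
  (sr_scalar lp0), (sr_scalar lp0).
split; try (split; exact: smooth_sr_scalar).
move=> x /SR_M_r_neq0 hr; apply: (tensor_repr_eq (Rt_repr a_neq0 hr) _ sr_Roter).
have hG := metric_repr a_neq0 hr; have hS := Ric_repr a_neq0 hr; have hS2 := Ric2_repr a_neq0 hr.
by repeat first [ apply: (tensor_repr_KN a_neq0 hr); eassumption
                | apply: (tensor_repr_scale a_neq0 hr); first reflexivity
                | apply: tensor_repr_add ].
Qed.

Lemma SR_Ricci_compatibilities :
  [/\ Ricci_Riemann_compatible g M, Ricci_Weyl_compatible g M,
      Ricci_concircular_compatible g M & Ricci_conharmonic_compatible g M].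
Proof.
split=> x /SR_M_r_neq0 hr; have hS := Sop_repr a_neq0 hr.
- exact: (compatible_repr a_neq0 hr (Rt_repr a_neq0 hr) hS sr_compatible_Rt).
- exact: (compatible_repr a_neq0 hr (Ct_repr a_neq0 hr) hS sr_compatible_Ct).
- exact: (compatible_repr a_neq0 hr (Wt_repr a_neq0 hr) hS sr_compatible_Wt).
- exact: (compatible_repr a_neq0 hr (Kt_repr a_neq0 hr) hS sr_compatible_Kt).
Qed.

End SomRaychaudhuriProperties.

Theorem mainTheorem1 (R : realType) (a : R) (ha : a != 0) :
  let g := SR_metric a in
  let M := @SR_M R in
  [/\ (* (i) *) Ricci_cyclic_parallel g M,
      (* (ii), (iii) *) k_quasi_Einstein g M 2 /\ Ein3 g M,
      (* (iv), (v) *) [/\ gen_quasi_Einstein_Chaki g M,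
                         gen_quasi_Einstein_DeGhosh g M &
                         pseudo_quasi_Einstein g M],
      (* (vi), (vii), (viii) *) [/\ special_Ricci_gen_pseudosymmetric g M,
                                   Weyl_pseudosymmetric g M &
                                   gen_Roter_type g M] &
      (* (ix) *)
      [/\ Ricci_Riemann_compatible g M, Ricci_Weyl_compatible g M,
          Ricci_concircular_compatible g M & Ricci_conharmonic_compatible g M]].
Proof.
split.
- exact: SR_Ricci_cyclic_parallel.
- exact: (conj (SR_2_quasi_Einstein ha) (SR_Ein3 ha)).
- split; [exact: SR_gen_quasi_Einstein_Chaki | exact: SR_gen_quasi_Einstein_DeGhosh
         | exact: SR_pseudo_quasi_Einstein].
- split; [exact: SR_special_Ricci_gen_pseudosymmetric | exact: SR_Weyl_pseudosymmetric
         | exact: SR_gen_Roter_type].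
- exact: SR_Ricci_compatibilities.
Qed.
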